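(* Let $\mathcal B$ be a finite set of complex numbers $\beta$ with $\mathrm{Re}(\beta)\ge\gamma\ge1$, let $s>0$, and $\theta_\beta(z)=(z+\beta)^{-1}$. Let $H$ be a bounded, mildly regular open subset of $\mathbb C$ with $H\supset\{z:|z-1/(2\gamma)|<1/(2\gamma)\}$ and $\mathrm{Re}(z)>0$ for all $z\in H$, and let $v_s$ be the strictly positive eigenvector (unique up to normalization) of $\Lambda_s:C^m(\bar H)\to C^m(\bar H)$, $(\Lambda_sf)(z)=\sum_{\beta\in\mathcal B}|z+\beta|^{-2s}f(\theta_\beta(z))$, $m\ge1$. Then for all $z_0,z_1\in H$, $$v_s(z_0)\le v_s(z_1)\exp\big[(\sqrt5\,s/\gamma)|z_1-z_0|\big].$$
   Context: $H$ is mildly regular if there exist $\eta>0$, $M\ge1$ such that whenever $x,y\in H$ with $\|x-y\|<\eta$ there is a Lipschitz $\psi:[0,1]\to H$ with $\psi(0)=x$, $\psi(1)=y$, $\int_0^1\|\psi'(t)\|dt\le M\|x-y\|$. $C^m(\bar H)$ is the space of real $C^m$ functions on $H$ whose partial derivatives of order $\le m$ extend continuously to $\bar H$. *)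

(* Complex numbers are represented as pairs
   (Re z, Im z) : R * R, with complex arithmetic and the complex modulus
   written out explicitly below. *)
From HB Require Import structures.
From mathcomp Require Import all_boot all_order all_algebra.
From mathcomp Require Import all_classical all_reals all_analysis.
Set Implicit Arguments. Unset Strict Implicit. Unset Printing Implicit Defensive.
Import Order.TTheory GRing.Theory Num.Theory.
Import numFieldNormedType.Exports.
Local Open Scope classical_set_scope.
Local Open Scope ring_scope.

Section Defs.
Variable R : realType.

Definition cabs (z : R * R) : R := Num.sqrt (z.1 ^+ 2 + z.2 ^+ 2).

Definition cinv (z : R * R) : R * R :=
  let n := z.1 ^+ 2 + z.2 ^+ 2 in (z.1 / n, - z.2 / n).

Definition theta (b z : R * R) : R * R := cinv (z + b).

Definition Lambda (B : seq (R * R)) (s : R) (f : R * R -> R) (z : R * R) : R :=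
  \sum_(b <- B) (cabs (z + b)) `^ (- (2 * s)) * f (theta b z).

Definition dir (i : bool) : R * R := if i then (1, 0) else (0, 1).

Fixpoint pd (l : seq bool) (f : R * R -> R) : R * R -> R :=
  match l with
  | [::] => f
  | i :: l' => fun p => 'D_(dir i) (pd l' f) p
  end.

(* f (restricted to the open set H) belongs to C^m(closure H): all partial
   derivatives of order <= m exist and are continuous on H, and each of
   them extends continuously to the closure of H. *)
Definition CmBar (m : nat) (H : set (R * R)) (f : R * R -> R) : Prop :=
  forall l : seq bool, (size l <= m)%N ->
    [/\ (size l < m)%N -> forall p, H p ->
          forall i, derivable (pd l f) p (dir i),
        forall p, H p -> {for p, continuous (pd l f)}
      & exists g : R * R -> R,
          {within closure H, continuous g} /\ forall p, H p -> pd l f p = g p].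

Definition mildly_regular (H : set (R * R)) : Prop :=
  exists eta : R, exists M : R, 0 < eta /\ 1 <= M /\
    forall x y, H x -> H y -> cabs (x - y) < eta ->
      exists psi : R -> R * R,
        [/\ [lipschitz psi t | t in `[0, 1]],
            forall t, t \in `[0, 1] -> H (psi t),
            psi 0 = x, psi 1 = y &
            (\int[lebesgue_measure]_(t in `[0%R, 1%R]) (cabs (derive1 psi t))%:E
               <= (M * cabs (x - y))%:E)%E].

End Defs.

(* For x, y in H, the eigen-equation, read as an equality of two sums over B, yields a branch b
   with v x * |y + b|^(-2s) * v (theta_b y) <= v y * |x + b|^(-2s) * v (theta_b x).  Along a
   chain of such steps the weights telescope: if g is the composite of the branches, then
   v x / v y <= (v (g x) / v (g y)) * (|y - p| / |x - p|)^(2s), where p = g^-1(oo) is the pole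
   of the Moebius map g and Re p <= -gamma.  As Re x > 0 we get |x - p| >= gamma, so the weight
   is at most exp (2s |x - y| / gamma).  Three steps take H into a compact set K included in H on
   which every theta_b contracts by (gamma + alpha)^-2 < 1, so g x and g y can be made
   arbitrarily close.  Maximising ln v x - ln v y - C |x - y| over K * K and comparing the
   maximiser with its images shows that the maximum is 0 whenever C > 2s / gamma; the bound on H
   follows in the same way, in particular for C = sqrt 5 * s / gamma. *)

From HB Require Import structures.
From mathcomp Require Import all_boot all_order all_algebra.
From mathcomp Require Import all_classical all_reals all_analysis.
From mathcomp Require Import ring lra.
Set Implicit Arguments. Unset Strict Implicit. Unset Printing Implicit Defensive.
Import Order.TTheory GRing.Theory Num.Theory.
Import numFieldNormedType.Exports.
Local Open Scope classical_set_scope.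
Local Open Scope ring_scope.

Lemma fst_continuous {T U : topologicalType} : continuous (@fst T U).
Proof. by move=> x; exact: cvg_fst. Qed.

Lemma snd_continuous {T U : topologicalType} : continuous (@snd T U).
Proof. by move=> x; exact: cvg_snd. Qed.

Lemma sum_eq_exists_le (R : realDomainType) (I : eqType) (l : seq I) (F G : I -> R) :
  l != [::] -> \sum_(i <- l) F i = \sum_(i <- l) G i -> exists2 i, i \in l & F i <= G i.
Proof.
move=> l0 eqFG; apply: contrapT => noFG.
have : \sum_(i <- l | i \in l) G i < \sum_(i <- l | i \in l) F i.
  apply: ltr_sum => [|i il]; first by case: l l0 {eqFG noFG} => // i l; rewrite /= mem_head.
  by rewrite ltNge; apply/negP => le; apply: noFG; exists i.
by rewrite -!big_seq eqFG ltxx.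
Qed.

Lemma exists_expr_lt (R : archiRealFieldType) (r e : R) :
  0 <= r < 1 -> 0 < e -> exists n, r ^+ n.+1 < e.
Proof.
move=> /andP[r0 r1] e0; have r_cvg : (GRing.exp r : R ^nat) @ \oo --> 0.
  by apply: cvg_expr; rewrite ger0_norm.
have [N _ hN] := cvgr_lt _ r_cvg _ e0.
by exists N; apply: hN => /=.
Qed.

Section ComplexPairs.
Context {R : realType}.
Implicit Types (z u w X Y P : R * R) (r : R).

Definition cnorm2 z : R := z.1 ^+ 2 + z.2 ^+ 2.

Lemma cnorm2_ge0 z : 0 <= cnorm2 z.
Proof. by rewrite addr_ge0 ?sqr_ge0. Qed.

Lemma cnorm2_gt0 z : z.1 != 0 -> 0 < cnorm2 z.
Proof. by move=> z1; rewrite ltr_wpDr ?sqr_ge0 ?exprn_even_gt0. Qed.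

Lemma cabsE z : cabs z = Num.sqrt (cnorm2 z).
Proof. by []. Qed.

Lemma cabs_ge0 z : 0 <= cabs z.
Proof. exact: sqrtr_ge0. Qed.

Lemma sqr_cabs z : cabs z ^+ 2 = cnorm2 z.
Proof. by rewrite sqr_sqrtr ?cnorm2_ge0. Qed.

Lemma norm_fst_le_cabs z : `|z.1| <= cabs z.
Proof. by rewrite cabsE -sqrtr_sqr ler_wsqrtr // lerDl sqr_ge0. Qed.

Lemma fst_le_cabs z : z.1 <= cabs z.
Proof. exact: le_trans (ler_norm _) (norm_fst_le_cabs z). Qed.

Lemma cabs_gt0 z : z.1 != 0 -> 0 < cabs z.
Proof. by move=> z1; rewrite (lt_le_trans _ (norm_fst_le_cabs z)) ?normr_gt0. Qed.

Lemma cabs_eq0 z : cabs z = 0 -> z = 0.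
Proof.
move=> /eqP; rewrite cabsE sqrtr_eq0 => n2_le0.
have /eqP : cnorm2 z = 0 by apply/le_anti; rewrite n2_le0 cnorm2_ge0.
rewrite paddr_eq0 ?sqr_ge0 // !sqrf_eq0 => /andP[/eqP z1 /eqP z2].
by case: z {n2_le0} z1 z2 => /= ? ? -> ->.
Qed.

Lemma cabs0 : cabs (0 : R * R) = 0.
Proof. by rewrite cabsE /cnorm2 /= expr0n addr0 sqrtr0. Qed.

Lemma cabs_subr_gt0 u w : u != w -> 0 < cabs (u - w).
Proof.
move=> uw; rewrite lt_neqAle cabs_ge0 andbT eq_sym.
by apply: contraNneq uw => /cabs_eq0/eqP; rewrite subr_eq0.
Qed.

Lemma cabsBC u w : cabs (u - w) = cabs (w - u).
Proof. by rewrite /cabs /cnorm2 /=; congr Num.sqrt; ring. Qed.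

Lemma cabsD_le u w : cabs (u + w) <= cabs u + cabs w.
Proof.
have cauchy_schwarz : (u.1 * w.1 + u.2 * w.2) ^+ 2 <= (cabs u * cabs w) ^+ 2.
  by rewrite exprMn !sqr_cabs /cnorm2; have := sqr_ge0 (u.1 * w.2 - u.2 * w.1); nra.
have dot_le : u.1 * w.1 + u.2 * w.2 <= cabs u * cabs w.
  by have := mulr_ge0 (cabs_ge0 u) (cabs_ge0 w); nra.
rewrite -ler_sqr ?nnegrE ?addr_ge0 ?cabs_ge0 // sqrrD !sqr_cabs /cnorm2 /=.
lra.
Qed.

Lemma cnorm2_continuous : continuous (@cnorm2).
Proof.
move=> z; apply: (@continuousD _ _ _ (fun z : R * R => z.1 ^+ 2) (fun z => z.2 ^+ 2)).
- by have := continuous_comp (@fst_continuous _ _ z) (@exprn_continuous R 2 z.1).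
- by have := continuous_comp (@snd_continuous _ _ z) (@exprn_continuous R 2 z.2).
Qed.

Lemma cabs_continuous : continuous (@cabs R).
Proof. by move=> z; have := continuous_comp (@cnorm2_continuous z) (@sqrt_continuous R _). Qed.

Lemma cinv_fst w : (cinv w).1 = w.1 / cnorm2 w.
Proof. by []. Qed.

Lemma cnorm2_cinv w : cnorm2 w != 0 -> cnorm2 (cinv w) = (cnorm2 w)^-1.
Proof. by rewrite /cnorm2 /cinv /= => w0; field. Qed.

Lemma cabs_cinvB X Y : cnorm2 X != 0 -> cnorm2 Y != 0 ->
  cabs (cinv X - cinv Y) * (cabs X * cabs Y) = cabs (X - Y).
Proof.
move=> X0 Y0; apply/eqP; rewrite -(@eqrXn2 _ 2) ?mulr_ge0 ?cabs_ge0 //.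
rewrite !exprMn !sqr_cabs; move: X0 Y0; rewrite /cnorm2 /cinv /= => X0 Y0.
by apply/eqP; field; rewrite X0 Y0.
Qed.

Lemma cabs_pole X P : cnorm2 X != 0 -> cnorm2 P != 0 ->
  cabs (X - cinv P) * cabs P = cabs X * cabs (cinv X - P).
Proof.
move=> X0 P0; apply/eqP; rewrite -(@eqrXn2 _ 2) ?mulr_ge0 ?cabs_ge0 //.
rewrite !exprMn !sqr_cabs; move: X0 P0; rewrite /cnorm2 /cinv /= => X0 P0.
by apply/eqP; field; rewrite X0 P0.
Qed.

(* The open disk with diameter [0, 1/r], image of the half-plane [Re w > r] under [cinv]. *)
Definition disk r : set (R * R) := [set u : R * R | cnorm2 u * r < u.1].

Lemma cinv_disk r w : 0 < r -> r < w.1 -> disk r (cinv w).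
Proof.
move=> r0 rw; have w0 : 0 < cnorm2 w by rewrite cnorm2_gt0 // gt_eqF // (lt_trans r0).
suff : cnorm2 (cinv w) * r < (cinv w).1 by [].
by rewrite cinv_fst cnorm2_cinv ?gt_eqF // mulrC ltr_pM2r ?invr_gt0.
Qed.

Lemma cinv_closed_disk r w : 0 < r -> r <= w.1 -> cnorm2 (cinv w) * r <= (cinv w).1.
Proof.
move=> r0 rw; have w0 : 0 < cnorm2 w by rewrite cnorm2_gt0 // gt_eqF // (lt_le_trans r0).
by rewrite cinv_fst cnorm2_cinv ?gt_eqF // mulrC ler_pM2r ?invr_gt0.
Qed.

End ComplexPairs.

Section Eigenfunction.
Context {R : realType}.
Variables (B : seq (R * R)) (gamma s lambda : R) (H : set (R * R)) (v : R * R -> R).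
Hypotheses (B_neq0 : B != [::]) (gamma_ge1 : 1 <= gamma).
Hypothesis gamma_le_fst : forall b, b \in B -> gamma <= b.1.
Hypothesis s_gt0 : 0 < s.
Hypothesis disk_sub_H :
  forall z, cabs (z - (1 / (2 * gamma), 0)) < 1 / (2 * gamma) -> H z.
Hypothesis H_fst_gt0 : forall z, H z -> 0 < z.1.
Hypothesis v_cont : forall z, H z -> {for z, continuous v}.
Hypothesis v_gt0 : forall z, H z -> 0 < v z.
Hypothesis v_eigen : forall z, H z -> Lambda B s v z = lambda * v z.

Let gamma_gt0 : 0 < gamma. Proof. exact: lt_le_trans ltr01 gamma_ge1. Qed.

Lemma fst_addB_ge b z c : b \in B -> c <= z.1 -> gamma + c <= (z + b).1.
Proof. by move=> /gamma_le_fst; rewrite /=; lra. Qed.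

Lemma disk_H : disk gamma `<=` H.
Proof.
move=> u u_disk; apply: disk_sub_H; set r := 1 / (2 * gamma).
have r_gt0 : 0 < r by rewrite divr_gt0 ?mulr_gt0.
rewrite cabsE -[ltRHS]ger0_norm ?ltW // -sqrtr_sqr ltr_sqrt ?exprn_gt0 //.
have -> : cnorm2 (u - (r, 0)) = cnorm2 u - u.1 / gamma + r ^+ 2.
  by rewrite /cnorm2 /r /=; field; rewrite gt_eqF.
by move: u_disk; rewrite /disk /= -ltr_pdivlMr // => u_disk; lra.
Qed.

Lemma disk_fst u : disk gamma u -> 0 < u.1 /\ cnorm2 u <= 1.
Proof.
rewrite /disk /= => u_disk; have n0 := cnorm2_ge0 u.
have u1_le : u.1 ^+ 2 <= cnorm2 u by rewrite lerDl sqr_ge0.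
have := ler_wpM2l n0 gamma_ge1; rewrite mulr1 => n_le.
have u1_gt0 : 0 < u.1 by lra.
by split => //; nra.
Qed.

Lemma theta_disk b z : b \in B -> 0 < z.1 -> disk gamma (theta b z).
Proof.
move=> bB z0; apply: cinv_disk => //.
by have := fst_addB_ge bB (lexx z.1); lra.
Qed.

Lemma theta_H b z : b \in B -> H z -> H (theta b z).
Proof. by move=> bB Hz; apply/disk_H/theta_disk/H_fst_gt0. Qed.

(* On [disk gamma], (u + b).1 >= gamma while |u + b|^2 <= 2 + 2 \sum_(b <- B) |b|^2. *)
Definition alpha := gamma / (2 + 2 * \sum_(b <- B) cnorm2 b).

Let sum_cnorm2_ge0 : 0 <= \sum_(b <- B) cnorm2 b.
Proof. by rewrite sumr_ge0 // => b _; apply: cnorm2_ge0. Qed.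

Lemma alpha_gt0 : 0 < alpha.
Proof. by rewrite divr_gt0 //; have := sum_cnorm2_ge0; lra. Qed.

Lemma fst_theta_ge b u : b \in B -> disk gamma u -> alpha <= (theta b u).1.
Proof.
move=> bB /disk_fst[u1_gt0 u_le1].
have b_le : cnorm2 b <= \sum_(c <- B) cnorm2 c.
  by rewrite (big_rem b) //= lerDl sumr_ge0 // => c _; apply: cnorm2_ge0.
have ub_le : cnorm2 (u + b) <= 2 + 2 * \sum_(c <- B) cnorm2 c.
  move: u_le1 b_le; rewrite /cnorm2 /= => u_le1 b_le.
  by have := sqr_ge0 (u.1 - b.1); have := sqr_ge0 (u.2 - b.2); nra.
have ub1 := fst_addB_ge bB (ltW u1_gt0).
have ub_gt0 : 0 < cnorm2 (u + b).
  by rewrite cnorm2_gt0 // gt_eqF //; have := gamma_gt0; lra.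
have := sum_cnorm2_ge0; have := gamma_gt0 => g0 S0.
rewrite cinv_fst /alpha ler_pdivlMr // mulrAC ler_pdivrMr; last lra.
by apply: ler_pM; lra.
Qed.

Definition K : set (R * R) :=
  [set u | alpha <= u.1] `&` [set u | cnorm2 u * (gamma + alpha) <= u.1].

Lemma theta_K b u : b \in B -> disk gamma u -> alpha <= u.1 -> K (theta b u).
Proof.
move=> bB u_disk u_ge; split; first exact: fst_theta_ge.
by apply: cinv_closed_disk (fst_addB_ge bB u_ge); have := alpha_gt0; have := gamma_gt0; lra.
Qed.

Lemma K_disk u : K u -> disk gamma u.
Proof.
case=> /= u_ge u_K; have a0 := alpha_gt0.
have : 0 < cnorm2 u by rewrite cnorm2_gt0 // gt_eqF //; lra.
by rewrite /disk /=; nra.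
Qed.

Lemma K_H : K `<=` H.
Proof. by move=> u /K_disk /disk_H. Qed.

Lemma K_compact : compact K.
Proof.
have box_compact : compact (`[(0 : R), 1] `*` `[(-1 : R), 1]).
  exact: compact_setX (@segment_compact R 0 1) (@segment_compact R (-1) 1).
apply: (subclosed_compact _ box_compact).
  apply: closedI.
    by have := preimage_closed (fun u _ => @fst_continuous _ _ u) (@closed_ge _ alpha).
  have diff_cont u : {for u, continuous (fun u : R * R => u.1 - cnorm2 u * (gamma + alpha))}.
    apply: continuousB; first exact: fst_continuous.
    by have := continuousM (@cnorm2_continuous _ u) (@cst_continuous _ _ (gamma + alpha) u).
  have := preimage_closed (fun u _ => diff_cont u) (@closed_ge _ 0).
  by congr closed; apply/seteqP; split => u /=; rewrite subr_ge0.
move=> u /K_disk /disk_fst[u1_gt0 u_le1] /=.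
have := sqr_ge0 u.1; have := sqr_ge0 u.2; move: u_le1; rewrite /cnorm2 => u_le1 *.
by rewrite !in_itv /=; split; apply/andP; split; nra.
Qed.

Lemma cabs_thetaB_le b x y c : b \in B -> 0 <= c -> c <= x.1 -> c <= y.1 ->
  cabs (theta b x - theta b y) <= (gamma + c) ^- 2 * cabs (x - y).
Proof.
move=> bB c0 cx cy; have xb := fst_addB_ge bB cx; have yb := fst_addB_ge bB cy.
have xb_le := fst_le_cabs (x + b); have yb_le := fst_le_cabs (y + b).
have gc : 0 < gamma + c by have := gamma_gt0; lra.
have xb0 : cnorm2 (x + b) != 0 by rewrite gt_eqF // cnorm2_gt0 // gt_eqF //; lra.
have yb0 : cnorm2 (y + b) != 0 by rewrite gt_eqF // cnorm2_gt0 // gt_eqF //; lra.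
have := cabs_cinvB xb0 yb0; rewrite opprD addrACA subrr addr0 => <-.
rewrite mulrCA ler_peMr ?cabs_ge0 // ler_pdivlMl ?exprn_gt0 // mulr1 expr2.
by apply: ler_pM; lra.
Qed.

Let fst_addB_gt0 b z : b \in B -> H z -> 0 < (z + b).1.
Proof.
move=> bB Hz; have := fst_addB_ge bB (ltW (H_fst_gt0 Hz)).
by have := H_fst_gt0 Hz; have := gamma_gt0; lra.
Qed.

Let cabs_addB_gt0 b z : b \in B -> H z -> 0 < cabs (z + b).
Proof. by move=> bB Hz; rewrite cabs_gt0 // lt0r_neq0 ?fst_addB_gt0. Qed.

Definition lnv z := ln (v z).

(* Logarithm of v x / v y <= (v x' / v y') * (|y - p| / |x - p|)^(2s); p is the pole of the
   composite of branches taking (x, y) to (x', y'). *)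
Definition ratio_bound x y x' y' p :=
  lnv x - lnv y + 2 * s * ln (cabs (x - p)) <=
  lnv x' - lnv y' + 2 * s * ln (cabs (y - p)).

Lemma ratio_bound_theta x y : H x -> H y ->
  exists2 b, b \in B & ratio_bound x y (theta b x) (theta b y) (- b).
Proof.
move=> Hx Hy; pose term z b := cabs (z + b) `^ (- (2 * s)) * v (theta b z).
have term_gt0 b z : b \in B -> H z -> 0 < term z b.
  by move=> bB Hz; rewrite /term mulr_gt0 ?powR_gt0 ?cabs_addB_gt0 ?v_gt0 //; apply: theta_H.
have [b bB le_b] : exists2 b, b \in B & v x * term y b <= v y * term x b.
  apply: (@sum_eq_exists_le _ _ B (fun b => v x * term y b) (fun b => v y * term x b) B_neq0).
  rewrite -!mulr_sumr; have := v_eigen Hx; have := v_eigen Hy.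
  by rewrite /Lambda => -> ->; ring.
have ln_term z : H z -> ln (term z b) = - (2 * s) * ln (cabs (z + b)) + lnv (theta b z).
  move=> Hz; have Htz := theta_H bB Hz.
  by rewrite lnM ?posrE ?powR_gt0 ?cabs_addB_gt0 ?v_gt0 // ln_powR.
have ln_vterm z w : H z -> H w -> ln (v z * term w b) = lnv z + ln (term w b).
  by move=> Hz Hw; rewrite lnM ?posrE ?v_gt0 ?term_gt0.
have vterm_gt0 z w : H z -> H w -> 0 < v z * term w b.
  by move=> Hz Hw; rewrite mulr_gt0 ?v_gt0 ?term_gt0.
move: le_b; rewrite -ler_ln ?posrE ?vterm_gt0 //.
rewrite !ln_vterm // !ln_term // => le_b.
by exists b => //; rewrite /ratio_bound !opprK; lra.
Qed.

Lemma ratio_bound_comp b x y x' y' p : b \in B -> H x -> H y -> p.1 < 0 ->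
  ratio_bound x y (theta b x) (theta b y) (- b) ->
  ratio_bound (theta b x) (theta b y) x' y' p ->
  ratio_bound x y x' y' (cinv p - b).
Proof.
move=> bB Hx Hy p1 w_b w_p; have p_gt0 : 0 < cabs p by rewrite cabs_gt0 // lt_eqF.
have ln_pole z : H z -> ln (cabs (z - (cinv p - b))) =
    ln (cabs (z + b)) + ln (cabs (theta b z - p)) - ln (cabs p).
  move=> Hz; have zb_gt0 := cabs_addB_gt0 bB Hz.
  have [tz_gt0 _] := disk_fst (theta_disk bB (H_fst_gt0 Hz)).
  have tzp_gt0 : 0 < cabs (theta b z - p).
    by rewrite cabs_gt0 // gt_eqF // (_ : _.1 = (theta b z).1 - p.1) //; lra.
  have zb_neq0 := lt0r_neq0 (cnorm2_gt0 (lt0r_neq0 (fst_addB_gt0 bB Hz))).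
  have e := cabs_pole zb_neq0 (lt0r_neq0 (cnorm2_gt0 (ltr0_neq0 p1))).
  rewrite opprB addrA; have zp_gt0 : 0 < cabs (z + b - cinv p).
    by rewrite -(pmulr_lgt0 _ p_gt0) e mulr_gt0.
  by have := congr1 (@ln R) e; rewrite !lnM ?posrE //; lra.
move: w_b w_p; rewrite /ratio_bound opprK !ln_pole //; lra.
Qed.

Definition transfer x y x' y' := exists2 p : R * R, p.1 <= - gamma & ratio_bound x y x' y' p.

Lemma transfer_lnv_le x y x' y' : H x -> H y -> transfer x y x' y' ->
  lnv x - lnv y <= lnv x' - lnv y' + 2 * s / gamma * cabs (x - y).
Proof.
move=> Hx Hy [p p1 w]; set d := cabs (x - y); have g0 := gamma_gt0.
have x1 := H_fst_gt0 Hx; have y1 := H_fst_gt0 Hy.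
have xp_ge : gamma <= cabs (x - p).
  by apply: le_trans (fst_le_cabs _); rewrite (_ : _.1 = x.1 - p.1) //; lra.
have yp_gt0 : 0 < cabs (y - p).
  by rewrite cabs_gt0 // gt_eqF // (_ : _.1 = y.1 - p.1) //; lra.
have yp_le : cabs (y - p) <= cabs (x - p) * expR (d / gamma).
  have -> : y - p = (y - x) + (x - p) by rewrite addrA subrK.
  apply: le_trans (cabsD_le _ _) _; rewrite cabsBC -/d.
  have := ler_wpM2l (le_trans (ltW g0) xp_ge) (expR_ge1Dx (d / gamma)).
  have : d <= cabs (x - p) * (d / gamma).
    by rewrite mulrA ler_pdivlMr // mulrC ler_wpM2r ?cabs_ge0.
  lra.
have xp_gt0 : 0 < cabs (x - p) by apply: lt_le_trans xp_ge.
have ln_le : ln (cabs (y - p)) <= ln (cabs (x - p)) + d / gamma.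
  rewrite -[d / gamma]expRK -lnM ?posrE ?expR_gt0 //.
  by rewrite ler_ln ?posrE ?mulr_gt0 ?expR_gt0.
by move: w; rewrite /ratio_bound; have := ler_wpM2l (ltW s_gt0) ln_le; lra.
Qed.

Definition reach r x y := exists x' y',
  [/\ K x', K y', transfer x y x' y' & cabs (x' - y') <= r * cabs (x - y)].

Lemma reach_theta1 k x y : H x -> H y ->
  (forall b, b \in B -> [/\ K (theta b x), K (theta b y) &
     cabs (theta b x - theta b y) <= k * cabs (x - y)]) ->
  reach k x y.
Proof.
move=> Hx Hy hB; have [b bB w] := ratio_bound_theta Hx Hy; have [Kx Ky le] := hB b bB.
by exists (theta b x), (theta b y); split => //; exists (- b); rewrite ?lerN2 ?gamma_le_fst.
Qed.

Lemma reach_theta r k x y : H x -> H y -> 0 <= r ->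
  (forall b, b \in B -> reach r (theta b x) (theta b y) /\
     cabs (theta b x - theta b y) <= k * cabs (x - y)) ->
  reach (r * k) x y.
Proof.
move=> Hx Hy r0 hB; have [b bB w] := ratio_bound_theta Hx Hy.
have [[x' [y' [Kx' Ky' [p p1 w'] le']]] le] := hB b bB.
have p1_lt0 : p.1 < 0 by have := gamma_gt0; lra.
exists x', y'; split => //; last by rewrite -mulrA (le_trans le') // ler_wpM2l.
exists (cinv p - b); last exact: ratio_bound_comp bB Hx Hy p1_lt0 w w'.
have : (cinv p).1 <= 0 by rewrite cinv_fst pmulr_lle0 ?invr_gt0 ?cnorm2_gt0 ?ltr0_neq0 // ltW.
by have := gamma_le_fst bB; rewrite /=; lra.
Qed.

Definition kappa := (gamma + alpha) ^- 2.

Lemma kappa_ge0 : 0 <= kappa.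
Proof. by rewrite invr_ge0 exprn_ge0 // addr_ge0 ?ltW ?alpha_gt0 ?gamma_gt0. Qed.

Lemma kappa_lt1 : kappa < 1.
Proof.
have ga1 : 1 < gamma + alpha by have := gamma_ge1; have := alpha_gt0; lra.
by rewrite invf_lt1 ?exprn_gt0 ?(lt_trans ltr01 ga1) // expr2; nra.
Qed.

Lemma reach_K n x y : K x -> K y -> reach (kappa ^+ n.+1) x y.
Proof.
have step z w b : K z -> K w -> b \in B -> [/\ K (theta b z), K (theta b w) &
    cabs (theta b z - theta b w) <= kappa * cabs (z - w)].
  move=> Kz Kw bB; have [z_ge _] := Kz; have [w_ge _] := Kw.
  split; [exact: theta_K (K_disk Kz) z_ge | exact: theta_K (K_disk Kw) w_ge |].
  exact: cabs_thetaB_le (ltW alpha_gt0) z_ge w_ge.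
elim: n x y => [|n IH] x y Kx Ky.
  by rewrite expr1; apply: reach_theta1 (K_H Kx) (K_H Ky) _ => b; apply: step.
rewrite exprSr; apply: reach_theta (K_H Kx) (K_H Ky) (exprn_ge0 _ kappa_ge0) _ => b bB.
by have [Kbx Kby le] := step _ _ _ Kx Ky bB; split; first exact: IH.
Qed.

Lemma reach_preimage (T U : set (R * R)) r : T `<=` H -> 0 <= r ->
  (forall b z, b \in B -> T z -> U (theta b z)) ->
  (forall x y, U x -> U y -> reach r x y) ->
  forall x y, T x -> T y -> reach r x y.
Proof.
move=> TH r0 TU reachU x y Tx Ty; rewrite -[r]mulr1.
apply: reach_theta (TH _ Tx) (TH _ Ty) r0 _ => b bB; split; first by apply: reachU; apply: TU.
have x1 := ltW (H_fst_gt0 (TH _ Tx)); have y1 := ltW (H_fst_gt0 (TH _ Ty)).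
apply: le_trans (cabs_thetaB_le bB (lexx 0) x1 y1) _; rewrite addr0 ler_wpM2r ?cabs_ge0 //.
by rewrite invf_le1 ?exprn_gt0 ?gamma_gt0 //; apply: exprn_ege1.
Qed.

Lemma reach_H n x y : H x -> H y -> reach (kappa ^+ n.+1) x y.
Proof.
have r0 := exprn_ge0 n.+1 kappa_ge0.
apply: (reach_preimage (U := disk gamma)) => //.
  by move=> b z bB /H_fst_gt0; apply: theta_disk.
apply: (reach_preimage (U := disk gamma `&` [set u | alpha <= u.1])) => //.
- exact: disk_H.
- by move=> b z bB z_disk; split; [apply: theta_disk (disk_fst z_disk).1 | apply: fst_theta_ge].
apply: (reach_preimage (U := K)) => //.
- by move=> u [/disk_H].
- by move=> b z bB [z_disk z_ge]; apply: theta_K.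
- exact: reach_K.
Qed.

Lemma lnv_lt_of_K_bound C m x y : 2 * s / gamma < C -> H x -> H y ->
  0 < cabs (x - y) ->
  (forall x' y', K x' -> K y' -> lnv x' - lnv y' <= m + C * cabs (x' - y')) ->
  lnv x - lnv y < m + C * cabs (x - y).
Proof.
move=> sC Hx Hy d_gt0 bound_K.
have sg0 : 0 < 2 * s / gamma by rewrite divr_gt0 ?mulr_gt0 ?gamma_gt0.
have C_gt0 : 0 < C by apply: lt_trans sC.
have [n kn] : exists n, kappa ^+ n.+1 < 1 - 2 * s / gamma / C.
  apply: exists_expr_lt; first by rewrite kappa_ge0 kappa_lt1.
  by rewrite subr_gt0 ltr_pdivrMr // mul1r.
have [x' [y' [Kx' Ky' tr le']]] := reach_H n Hx Hy.
have := transfer_lnv_le Hx Hy tr; have := bound_K _ _ Kx' Ky'.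
have : C * cabs (x' - y') < (C - 2 * s / gamma) * cabs (x - y).
  apply: le_lt_trans (ler_wpM2l (ltW C_gt0) le') _.
  rewrite mulrA ltr_pM2r //.
  have : C * kappa ^+ n.+1 < C * (1 - 2 * s / gamma / C) by rewrite ltr_pM2l.
  by rewrite mulrBr mulr1 mulrCA mulfV ?gt_eqF // mulr1.
lra.
Qed.

Lemma lnv_continuous z : H z -> {for z, continuous lnv}.
Proof. by move=> Hz; have := continuous_comp (v_cont Hz) (continuous_ln (v_gt0 Hz)). Qed.

Lemma lnv_lipschitz_K C x y : 2 * s / gamma < C -> K x -> K y ->
  lnv x - lnv y <= C * cabs (x - y).
Proof.
move=> sC Kx Ky; pose phi u := lnv u.1 - lnv u.2 - C * cabs (u.1 - u.2).
have phi_cont : {within K `*` K, continuous phi}.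
  rewrite continuous_subspace_in => u /set_mem uKK.
  have [/K_H Hu1 /K_H Hu2] := uKK; apply: continuous_subspaceT_for uKK _.
  have c1 : {for u, continuous (fun w : (R * R) * (R * R) => lnv w.1)}.
    exact: continuous_comp (@fst_continuous _ _ u) (lnv_continuous Hu1).
  have c2 : {for u, continuous (fun w : (R * R) * (R * R) => lnv w.2)}.
    exact: continuous_comp (@snd_continuous _ _ u) (lnv_continuous Hu2).
  have c3 : {for u, continuous (fun w : (R * R) * (R * R) => cabs (w.1 - w.2))}.
    have := continuousB (@fst_continuous _ _ u) (@snd_continuous _ _ u).
    by move/continuous_comp; apply; apply: cabs_continuous.
  have := continuousB (continuousB c1 c2) (continuousM (@cst_continuous _ _ C u) c3).
  exact.
have [[x0 y0] /set_mem[Kx0 Ky0] phi_max] := compact_EVT_max (ex_intro _ (x, y) (conj Kx Ky))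
  (compact_setX K_compact K_compact) phi_cont.
have phi_le u w : K u -> K w -> phi (u, w) <= phi (x0, y0).
  by move=> Ku Kw; apply: phi_max; apply/mem_set.
have x0_y0 : x0 = y0.
  apply/eqP; apply: contraT => /cabs_subr_gt0 d_gt0.
  have := lnv_lt_of_K_bound (m := phi (x0, y0)) sC (K_H Kx0) (K_H Ky0) d_gt0.
  suff bound_K x' y' : K x' -> K y' -> lnv x' - lnv y' <= phi (x0, y0) + C * cabs (x' - y').
    by move/(_ bound_K); rewrite /phi /=; lra.
  by move=> Kx' Ky'; have := phi_le _ _ Kx' Ky'; rewrite /phi /=; lra.
have phi0 : phi (x0, y0) = 0.
  by rewrite /phi [(x0, y0).1]/= [(x0, y0).2]/= x0_y0 !subrr cabs0 mulr0 subr0.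
by have := phi_le _ _ Kx Ky; rewrite phi0 /phi /=; lra.
Qed.

Lemma lnv_lipschitz C x y : 2 * s / gamma < C -> H x -> H y ->
  lnv x - lnv y <= C * cabs (x - y).
Proof.
move=> sC Hx Hy; have [->|/cabs_subr_gt0 d_gt0] := eqVneq x y.
  by rewrite !subrr cabs0 mulr0.
rewrite -[C * _]add0r ltW // lnv_lt_of_K_bound // => x' y' Kx' Ky'.
by rewrite add0r lnv_lipschitz_K.
Qed.

Lemma v_le_expR C z0 z1 : 2 * s / gamma < C -> H z0 -> H z1 ->
  v z0 <= v z1 * expR (C * cabs (z1 - z0)).
Proof.
move=> sC H0 H1; have := lnv_lipschitz sC H0 H1; rewrite /lnv cabsBC => le_ln.
rewrite -[v z0]lnK ?posrE ?v_gt0 // -[v z1]lnK ?posrE ?v_gt0 // -expRD ler_expR.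
lra.
Qed.

End Eigenfunction.

Theorem corollary7p12 (R : realType) (B : seq (R * R)) (gamma s : R) (m : nat)
  (H : set (R * R)) (v : R * R -> R) (lambda : R) :
  B != [::] -> uniq B ->
  1 <= gamma -> (forall b, b \in B -> gamma <= b.1) ->
  0 < s -> (1 <= m)%N ->
  open H -> bounded_set H -> mildly_regular H ->
  (forall z, cabs (z - (1 / (2 * gamma), 0)) < 1 / (2 * gamma) -> H z) ->
  (forall z, H z -> 0 < z.1) ->
  CmBar m H v ->
  {within closure H, continuous v} ->
  (forall z, closure H z -> 0 < v z) ->
  (forall z, H z -> Lambda B s v z = lambda * v z) ->
  forall z0 z1, H z0 -> H z1 ->
    v z0 <= v z1 * expR (Num.sqrt 5 * s / gamma * cabs (z1 - z0)).
Proof.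
move=> B_neq0 _ gamma_ge1 gamma_le_fst s_gt0 _ _ _ _ disk_sub fst_gt0 v_Cm _ v_pos v_eigen.
have v_cont z : H z -> {for z, continuous v}.
  by move=> Hz; have [_ + _] := v_Cm [::] (leq0n m); apply.
have v_gt0 z : H z -> 0 < v z by move=> Hz; apply/v_pos/subset_closure.
have sqrt5_gt2 : 2 < Num.sqrt (5 : R).
  have -> : (2 : R) = Num.sqrt (2 ^+ 2) by rewrite sqrtr_sqr ger0_norm.
  by rewrite ltr_sqrt // expr2; lra.
move=> z0 z1; apply: (v_le_expR B_neq0 gamma_ge1 gamma_le_fst s_gt0 disk_sub fst_gt0
  v_cont v_gt0 v_eigen).
by rewrite ltr_pM2r ?invr_gt0 ?(lt_le_trans ltr01) // ltr_pM2r.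
Qed.
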